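(* Let $E$ be an Anderson $t$-module of dimension $d$ over $\mathscr O_L$ and $P$ a monic irreducible polynomial of $A$. Then the $P$-adic logarithm $\log_{\widetilde E,P}$ is injective on $\Omega_z^+=\{x\in\mathbb T_z(L_P)^d:v_P(x)>0\}$.
   Context: $\mathbb F_q$ finite field, $A=\mathbb F_q[\theta]$, $K=\mathbb F_q(\theta)$, $L/K$ finite, $\mathscr O_L$ integral closure of $A$ in $L$, $\tau$ the $q$-Frobenius. An Anderson $t$-module of dimension $d$ over $\mathscr O_L$ is an $\mathbb F_q$-algebra homomorphism $E:A\to M_d(\mathscr O_L)\{\tau\}$, $E_a=\sum_iE_{a,i}\tau^i$, with $(E_{a,0}-aI_d)^d=0$, $\deg_\tau E_\theta>0$. $\log_E=\sum l_n\tau^n$ is the unique series with $l_0=I_d$ and $\log_EE_a=E_{a,0}\log_E$. With $z$ an indeterminate fixed by $\tau$, $\widetilde E_a=\sum E_{a,i}z^i\tau^i$ and $\log_{\widetilde E}=\sum l_nz^n\tau^n$. $K_P$ is the $P$-adic completion of $K$, $\mathbb T_z(K_P)$ the Tate algebra in $z$ with Gauss valuation, $\mathbb T_z(L_P)=L\otimes_K\mathbb T_z(K_P)$, with $v_P(\sum f_i\otimes x_i)=\min v_P(x_i)$ for a fixed $A$-basis $(f_i)$ of $\mathscr O_L$, and minimum over coordinates on $d$-tuples. $\log_{\widetilde E,P}$ is $\log_{\widetilde E}$ viewed as a $P$-adic function; it converges on $\Omega_z^+$. *)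

From HB Require Import structures.
From mathcomp Require Import all_boot all_order all_algebra all_field.
From mathcomp Require Import fraction.
Set Implicit Arguments. Unset Strict Implicit. Unset Printing Implicit Defensive.
Import Order.TTheory GRing.Theory Num.Theory.
Local Open Scope ring_scope.

Section AndersonDefs.
Variable F : finFieldType.
Local Notation A := {poly F}.                    (* A = F_q[theta], theta = 'X *)
Local Notation K := {fraction {poly F}}.
Variable L : fieldExtType K.

Definition AtoK (a : A) : K := FracField.tofrac a.
Definition AtoL (a : A) : L := (AtoK a)%:A.

Definition integral_A (x : L) : Prop :=
  exists p : {poly A}, p \is monic /\ root (map_poly AtoL p) x.

Definition is_A_basis (n : nat) (f : n.-tuple L) : Prop :=
  (forall i, integral_A (tnth f i)) /\
  (forall x, integral_A x ->
     exists! c : 'I_n -> A, x = \sum_(i < n) AtoL (c i) * tnth f i).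

Variable d : nat.

(* twist of a matrix by tau^m : entrywise q^m-th power *)
Definition twist (m : nat) (M : 'M[L]_d) : 'M[L]_d :=
  map_mx (fun a => a ^+ (#|F| ^ m)) M.

(* twisted power series in tau with coefficients in M_d(L): u = sum_i u i tau^i;
   product (u v)_m = sum_{i+j=m} u_i v_j^{(q^i)} *)
Definition tmul (u v : nat -> 'M[L]_d) (m : nat) : 'M[L]_d :=
  \sum_(i < m.+1) u i *m twist i (v (m - i)).

Definition fin_supp (u : nat -> 'M[L]_d) : Prop :=
  exists r, forall i, (r < i)%N -> u i = 0.

(* E : A -> M_d(O_L){tau}, E a = sum_i E a i tau^i, an Anderson t-module *)
Definition is_t_module (E : A -> nat -> 'M[L]_d) : Prop :=
  [/\ forall a, fin_supp (E a),
      forall a i (j k : 'I_d), integral_A (E a i j k)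
    & forall a b i, E (a + b) i = E a i + E b i] /\
  [/\ 
      forall a b i, E (a * b) i = tmul (E a) (E b) i,
      (forall (c : F) i, E c%:P i = if i == 0%N then (AtoL c%:P)%:M else 0),
      forall a, (E a 0%N - (AtoL a)%:M) ^+ d = 0
    & exists2 i, (0 < i)%N & E 'X i != 0].

(* l = (l_n) is the logarithm of E: l_0 = I_d and log_E E_a = E_{a,0} log_E *)
Definition is_log (E : A -> nat -> 'M[L]_d) (l : nat -> 'M[L]_d) : Prop :=
  l 0%N = 1%:M /\ forall a m, tmul l (E a) m = E a 0%N *m l m.

(* ---- the P-adic completion K_P, characterised up to unique isomorphism:
   a valued field KP with a ring embedding iota : K -> KP, valuation v (v x only
   meaningful for x != 0) extending v_P on K, K dense in KP, KP complete. *)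
Variable KP : fieldType.
Variable iota : {rmorphism K -> KP}.
Variable v : KP -> int.

(* v(x) >= N, with v(0) = +oo *)
Definition vge (x : KP) (N : int) : bool := (x == 0) || (N <= v x).

Definition is_P_completion (P : A) : Prop :=
  [/\ forall x y, x != 0 -> y != 0 -> v (x * y) = v x + v y,
      forall x y, x != 0 -> y != 0 -> vge (x + y) (Num.min (v x) (v y)),
      forall a : A, a != 0 -> exists m : nat,
          [/\ v (iota (AtoK a)) = m%:Z, P ^+ m %| a & ~~ (P ^+ m.+1 %| a)],
      forall (x : KP) (N : int), exists k : K, vge (x - iota k) N
    & forall u : nat -> KP,
        (forall N : int, exists M, forall m k, (M <= m)%N -> (M <= k)%N ->
             vge (u m - u k) N) ->
        exists lim, forall N : int, exists M, forall m, (M <= m)%N -> vge (u m - lim) N].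

(* ---- T_z(L_P)^d = (L (x)_K T_z(K_P))^d, written in coordinates w.r.t. the
   basis f of O_L: X j i k = coefficient of z^k of the i-th coordinate of the
   j-th component. *)
Variable n : nat.
Variable f : n.-tuple L.
Local Notation elt := ('I_d -> 'I_n -> nat -> KP).

(* tau : Frobenius on coefficients, fixing z *)
Definition tauT (X : elt) : elt := fun j i k =>
  \sum_(i' < n) iota (coord f i (tnth f i' ^+ #|F|)) * (X j i' k) ^+ #|F|.

(* multiplication by z^m *)
Definition zshift (m : nat) (X : elt) : elt := fun j i k =>
  if (m <= k)%N then X j i (k - m)%N else 0.

Definition matact (M : 'M[L]_d) (X : elt) : elt := fun j i k =>
  \sum_(j' < d) \sum_(i' < n) iota (coord f i (M j j' * tnth f i')) * X j' i' k.

Definition logterm (l : nat -> 'M[L]_d) (m : nat) (X : elt) : elt :=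
  matact (l m) (zshift m (iter m tauT X)).

Definition logpartial (l : nat -> 'M[L]_d) (N : nat) (X : elt) : elt :=
  fun j i k => \sum_(m < N) logterm l m X j i k.

(* log_{E~,P}(X) = S : the series sum_m l_m z^m tau^m (X) converges to S for v_P *)
Definition logsum (l : nat -> 'M[L]_d) (X S : elt) : Prop :=
  forall N0 : int, exists M, forall N, (M <= N)%N ->
    forall j i k, vge (logpartial l N X j i k - S j i k) N0.

(* X in T_z(L_P)^d with v_P(X) > 0 *)
Definition OmegaPlus (X : elt) : Prop :=
  (forall j i (N0 : int), exists M, forall k, (M <= k)%N -> vge (X j i k) N0) /\
  (forall j i k, vge (X j i k) 1).

End AndersonDefs.

(** Coefficientwise in [z], the twisted logarithm [sum_m l_m z^m tau^m] is
    unitriangular: [z^m] shifts coefficients up by [m] while [tau] and [l_m] act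
    on each coefficient separately, and [l_0 = 1]. So the [z^k]-coefficient of
    [log(X)] is [X_k] plus a function of [X_0, ..., X_(k-1)], and [X] is
    recovered from [log(X)] by induction on [k]. The valuation only serves to
    identify the limit coefficientwise. *)
From HB Require Import structures.
From mathcomp Require Import all_boot all_order all_algebra all_field.
From mathcomp Require Import fraction generic_quotient.
From Stdlib Require Import FunctionalExtensionality.
Set Implicit Arguments. Unset Strict Implicit. Unset Printing Implicit Defensive.
Local Open Scope ring_scope.
Import GRing.Theory Num.Theory.
Local Open Scope quotient_scope.

Lemma tofrac_clear_denom {R : idomainType} (x : {fraction R}) :
  exists ab : R * R, ab.2 != 0 /\ x * FracField.tofrac ab.2 = FracField.tofrac ab.1.
Proof.
elim/quotW: x => r; exists (r.1, r.2); split; first exact: denom_ratioP.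
unlock FracField.tofrac => /=.
change (FracField.mul (\pi_(FracField.type R) r) (\pi_(FracField.type R) (Ratio r.2 1))
  = \pi_(FracField.type R) (Ratio r.1 1)).
rewrite -FracField.pi_mul; apply/eqmodP; rewrite /= FracField.equivfE.
rewrite !numden_Ratio ?mulf_neq0 ?oner_neq0 ?denom_ratioP //.
by rewrite !(mulr1, mul1r) mulrC.
Qed.

Lemma tofrac_common_denom {R : idomainType} {n : nat} (k : 'I_n -> {fraction R}) :
  exists2 D : R, D != 0 &
    exists c : 'I_n -> R, forall i, FracField.tofrac (c i) = k i * FracField.tofrac D.
Proof.
have [g hg] := fin_all_exists (fun i => tofrac_clear_denom (k i)).
exists (\prod_i (g i).2); first by apply/prodf_neq0 => i _; case: (hg i).
exists (fun i => (g i).1 * \prod_(j | j != i) (g j).2) => i.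
by rewrite [in RHS](bigD1 i) //= !rmorphM mulrA (proj2 (hg i)).
Qed.

Section IntegralBasis.
Variables (F : finFieldType) (L : fieldExtType {fraction {poly F}}).

Lemma AtoL0 : AtoL L 0 = 0.
Proof. by rewrite /AtoL /AtoK tofrac0 scale0r. Qed.

Lemma integral_A0 : integral_A (0 : L).
Proof.
exists 'X; split; first exact: monicX.
rewrite /root horner_coef0 coef_map_id0 ?AtoL0 //.
by rewrite coefX AtoL0.
Qed.

Lemma A_basis_free (n : nat) (f : n.-tuple L) : is_A_basis f -> free f.
Proof.
case=> _ A_coords; apply/freeP => k k_rel.
have [D D_neq0 [c c_def]] := tofrac_common_denom k.
have c_rel : 0 = \sum_i AtoL L (c i) * tnth f i.
  under eq_bigr => i _ do
    rewrite /AtoL /AtoK c_def -scalerAl mul1r mulrC -scalerA (tnth_nth 0).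
  by rewrite -scaler_sumr k_rel scaler0.
have zero_rel : 0 = \sum_i AtoL L ((fun=> 0) i) * tnth f i.
  by rewrite big1 // => i _; rewrite AtoL0 mul0r.
have [c0 [_ c0_uniq]] := A_coords 0 integral_A0.
move=> i; have := c_def i.
rewrite -(c0_uniq _ c_rel) (c0_uniq _ zero_rel) tofrac0 => /esym/eqP.
by rewrite mulf_eq0 tofrac_eq0 (negPf D_neq0) orbF => /eqP.
Qed.

End IntegralBasis.

Lemma vge_forall_eq0 (KP : fieldType) (v : KP -> int) (x : KP) :
  (forall N0, vge v x N0) -> x = 0.
Proof.
move=> x_ge; apply/eqP; have /orP[//|] := x_ge (v x + 1).
by rewrite gerDl ler10.
Qed.

Section TwistedLogarithmCoefficients.
Variables (F : finFieldType) (L : fieldExtType {fraction {poly F}}) (d : nat)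
  (KP : fieldType) (iota : {rmorphism {fraction {poly F}} -> KP}) (v : KP -> int)
  (n : nat) (f : n.-tuple L) (l : nat -> 'M[L]_d).
Local Notation elt := ('I_d -> 'I_n -> nat -> KP).
Local Notation coef_eq X Y k := (forall j i, X j i k = Y j i k).

Lemma iter_tauT_coef (X Y : elt) k m :
  coef_eq X Y k -> coef_eq (iter m (tauT iota f) X) (iter m (tauT iota f) Y) k.
Proof.
move=> XY; elim: m => [|m IHm] j i //=.
by apply: eq_bigr => i' _; rewrite IHm.
Qed.

Lemma matact_coef (M : 'M[L]_d) (X Y : elt) k :
  coef_eq X Y k -> coef_eq (matact iota f M X) (matact iota f M Y) k.
Proof.
by move=> XY j i; apply: eq_bigr => j' _; apply: eq_bigr => i' _; rewrite XY.
Qed.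

Lemma matact1 (X : elt) j i k : free f -> matact iota f 1%:M X j i k = X j i k.
Proof.
move=> f_free; rewrite /matact (bigD1 j) //= [X in _ + X]big1 ?addr0 => [|j' j'_neq].
  rewrite (bigD1 i) //= [X in _ + X]big1 ?addr0 => [|i' i'_neq].
    by rewrite mxE eqxx mul1r (tnth_nth 0) coord_free // eqxx rmorph1 mul1r.
  by rewrite mxE eqxx mul1r (tnth_nth 0) coord_free // (negPf i'_neq) rmorph0 mul0r.
rewrite big1 // => i' _.
by rewrite mxE eq_sym (negPf j'_neq) mul0r linear0 rmorph0 mul0r.
Qed.

Lemma logterm_coef_lt (X : elt) m j i k :
  (k < m)%N -> logterm iota f l m X j i k = 0.
Proof.
move=> k_lt_m; rewrite /logterm /matact big1 // => j' _; rewrite big1 // => i' _.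
by rewrite /zshift leqNgt k_lt_m mulr0.
Qed.

Lemma logterm_coef_lower (X Y : elt) m k : (0 < m)%N ->
  (forall k', (k' < k)%N -> coef_eq X Y k') ->
  coef_eq (logterm iota f l m X) (logterm iota f l m Y) k.
Proof.
move=> m_gt0 XY; apply: matact_coef => j i; rewrite /zshift.
case: ifP => // m_le_k; apply: iter_tauT_coef => {}j {}i; apply: XY.
by rewrite ltn_subrL m_gt0 (leq_trans m_gt0 m_le_k).
Qed.

Lemma logterm0 (X : elt) j i k : l 0%N = 1%:M -> free f ->
  logterm iota f l 0 X j i k = X j i k.
Proof. by move=> l0 f_free; rewrite /logterm l0 matact1 // /zshift subn0. Qed.

Lemma logpartial_coef (X : elt) N j i k : (k < N)%N ->
  logpartial iota f l N X j i k = \sum_(m < k.+1) logterm iota f l m X j i k.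
Proof.
move=> k_lt_N; rewrite /logpartial -(subnKC k_lt_N) big_split_ord /=.
by rewrite [X in _ + X]big1 ?addr0 // => m _; rewrite logterm_coef_lt // ltnS leq_addr.
Qed.

Lemma logsum_coef (X S : elt) : logsum iota v f l X S ->
  forall j i k, S j i k = \sum_(m < k.+1) logterm iota f l m X j i k.
Proof.
move=> XS j i k; apply/eqP; rewrite eq_sym -subr_eq0; apply/eqP.
apply: (@vge_forall_eq0 _ v) => N0; have [M M_ge] := XS N0.
have := M_ge (maxn M k.+1) (leq_maxl _ _) j i k.
by rewrite logpartial_coef // leq_maxr.
Qed.

Lemma logsum_inj (X Y S : elt) : l 0%N = 1%:M -> free f ->
  logsum iota v f l X S -> logsum iota v f l Y S -> X = Y.
Proof.
move=> l0 f_free XS YS.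
suff XY k : coef_eq X Y k.
  by do 3![apply: functional_extensionality => ?]; apply: XY.
elim/ltn_ind: k => k IHk j i.
have := logsum_coef XS j i k; rewrite (logsum_coef YS) !big_ord_recl !logterm0 //.
have -> : \sum_(m < k) logterm iota f l (lift ord0 m) X j i k =
          \sum_(m < k) logterm iota f l (lift ord0 m) Y j i k.
  by apply: eq_bigr => m _; apply: logterm_coef_lower.
by move/addIr.
Qed.

End TwistedLogarithmCoefficients.

Theorem mainTheorem18 (F : finFieldType) (L : fieldExtType {fraction {poly F}})
  (d : nat) (E : {poly F} -> nat -> 'M[L]_d) (hE : is_t_module E)
  (l : nat -> 'M[L]_d) (hl : is_log E l)
  (n : nat) (f : n.-tuple L) (hf : is_A_basis f)
  (P : {poly F}) (hPm : P \is monic) (hPirr : irreducible_poly P)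
  (KP : fieldType) (iota : {rmorphism {fraction {poly F}} -> KP}) (v : KP -> int)
  (hKP : is_P_completion iota v P)
  (X Y S : 'I_d -> 'I_n -> nat -> KP) :
  OmegaPlus v X -> OmegaPlus v Y ->
  logsum iota v f l X S -> logsum iota v f l Y S -> X = Y.
Proof.
move=> _ _; apply: logsum_inj; first exact: proj1 hl.
exact: A_basis_free hf.
Qed.
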